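(* Consider the online asynchronous testing setting with conflict sets described in the context. Suppose that the null $p$-values are super-uniform conditional on the non-conflicting information available at their decision time, i.e. for every $t\in\mathcal{H}^0$ and every $u\in[0,1]$, $\mathbb{P}(P_t\le u\mid \mathcal{F}^{-\mathcal{X}^{E_t}})\le u$. Then any LORD* procedure and any SAFFRON* procedure with target level $\alpha$ (where $\mathcal{F}$ denotes the LORD* filtration for LORD* and the SAFFRON* filtration for SAFFRON* ) guarantee $\mathrm{mFDR}(t)\le\alpha$ for all $t\in\mathbb{N}$.
   Context: Hypotheses $H_1,H_2,\dots$ are tested; the test of $H_t$ starts at step $t$, is run at a test level $\alpha_t\ge 0$ (and, for SAFFRON*-type procedures, uses a candidacy threshold $\lambda_t$ with $\alpha_t\le\lambda_t<1$), and produces a $p$-value $P_t$. $\mathcal{H}^0\subseteq\mathbb{N}$ is the fixed (unknown) set of indices of true null hypotheses. Each test $t$ has a fixed (deterministic) decision time $E_t\in\mathbb{N}$ with $E_t\ge t$. Let $R_t=\mathbf{1}\{P_t\le\alpha_t\}$ and $C_t=\mathbf{1}\{P_t\le\lambda_t\}$. Let $\{L_t\}$ be a fixed sequence of nonnegative integer lags with $L_{t+1}\le L_t+1$. The conflict set of test $t$ is $\mathcal{X}^t=\{i\in[t-1]:E_i\ge t\}\cup\big(\{t-L_t,\dots,t-1\}\cap[t-1]\big)$. The non-conflicting $\sigma$-algebras are $\mathcal{L}^{-\mathcal{X}^t}=\sigma(R_i: i\le t-1,\ i\notin\mathcal{X}^t)$ (LORD* filtration) and $\mathcal{S}^{-\mathcal{X}^t}=\sigma(R_i,C_i: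 i\le t-1,\ i\notin\mathcal{X}^t)$ (SAFFRON* filtration); $\mathcal{F}^{-\mathcal{X}^t}$ denotes the relevant one. The set of rejections by time $t$ is $\mathcal{R}(t)=\{i\in[t]: E_i\le t,\ P_i\le\alpha_i\}$ and $\mathcal{V}(t)=\mathcal{R}(t)\cap\mathcal{H}^0$; $\mathrm{mFDR}(t)=\mathbb{E}|\mathcal{V}(t)|/\mathbb{E}[|\mathcal{R}(t)|\vee 1]$. A LORD* procedure is any rule choosing each $\alpha_t\ge0$ to be $\mathcal{L}^{-\mathcal{X}^t}$-measurable such that, for all $t\in\mathbb{N}$, $\sum_{j\le t}\alpha_j\le \alpha\big((\sum_{j<t,\,j\notin\mathcal{X}^t}R_j)\vee1\big)$. A SAFFRON* procedure is any rule choosing $\alpha_t,\lambda_t$ (with $0\le\alpha_t\le\lambda_t<1$) to be $\mathcal{S}^{-\mathcal{X}^t}$-measurable such that, for all $t\in\mathbb{N}$, $\sum_{j<t,\,j\notin\mathcal{X}^t}\frac{\alpha_j}{1-\lambda_j}\mathbf{1}\{P_j>\lambda_j\}+\sum_{j\in\mathcal{X}^t\cup\{t\}}\frac{\alpha_j}{1-\lambda_j}\le\alpha\big((\sum_{j<t,\,j\notin\mathcal{X}^t}R_j)\vee1\big)$. *)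

From HB Require Import structures.
From mathcomp Require Import all_boot all_order all_algebra.
From mathcomp Require Import all_classical all_reals all_analysis.
Set Implicit Arguments. Unset Strict Implicit. Unset Printing Implicit Defensive.
Import Order.TTheory GRing.Theory Num.Theory.
Local Open Scope classical_set_scope.
Local Open Scope ring_scope.

(* Tests are indexed by 1, 2, 3, ...; the value at index 0 is never used. *)

Definition in_conflict (E L : nat -> nat) (t i : nat) : bool :=
  (1 <= i < t)%N && ((t <= E i)%N || (t - L t <= i)%N).

Definition nonconf (E L : nat -> nat) (t i : nat) : bool :=
  (1 <= i < t)%N && ~~ in_conflict E L t i.

Definition sigma_of {T V : Type} (Y : T -> V) : set (set T) :=
  [set A | exists B : set V, A = Y @^-1` B].

Definition F_measurable {T : Type} {R : realType} (F : set (set T)) (f : T -> R) :=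
  forall B : set R, measurable B -> F (f @^-1` B).

Section Defs.
Context {d : measure_display} {T : measurableType d} {R : realType}.

Definition rej (pv alpha : nat -> T -> R) (t : nat) (w : T) : bool :=
  pv t w <= alpha t w.
Definition cand (pv lam : nat -> T -> R) (t : nat) (w : T) : bool :=
  pv t w <= lam t w.

Definition LORD_filt (E L : nat -> nat) (pv alpha : nat -> T -> R) (t : nat)
  : set (set T) :=
  sigma_of (fun w : T => fun i : nat =>
              if nonconf E L t i then rej pv alpha i w else false).

Definition SAFFRON_filt (E L : nat -> nat) (pv alpha lam : nat -> T -> R)
  (t : nat) : set (set T) :=
  sigma_of (fun w : T => fun i : nat =>
              if nonconf E L t i then (rej pv alpha i w, cand pv lam i w)
              else (false, false)).

Definition nrej (E : nat -> nat) (pv alpha : nat -> T -> R) (t : nat) (w : T) : R :=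
  \sum_(1 <= i < t.+1 | (E i <= t)%N) (rej pv alpha i w)%:R.

Definition nfalse (H0 : set nat) (E : nat -> nat) (pv alpha : nat -> T -> R)
  (t : nat) (w : T) : R :=
  \sum_(1 <= i < t.+1 | (E i <= t)%N && (i \in H0)) (rej pv alpha i w)%:R.

(* mFDR(t) = E|V(t)| / E[|R(t)| ∨ 1]  (both expectations are finite, the
   integrands being bounded). *)
Definition mFDR (P : probability T R) (H0 : set nat) (E : nat -> nat)
  (pv alpha : nat -> T -> R) (t : nat) : R :=
  fine ('E_P[nfalse H0 E pv alpha t])%E /
  fine ('E_P[fun w => Num.max (nrej E pv alpha t w) 1%R])%E.

(* Conditional super-uniformity of null p-values:
   P(P_t <= u | F_t) <= u a.s., written out via the defining property of
   conditional probability: for every A in F_t, P({P_t <= u} ∩ A) <= u P(A). *)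
Definition cond_superuniform (P : probability T R) (H0 : set nat)
  (pv : nat -> T -> R) (F : nat -> set (set T)) : Prop :=
  forall t : nat, (1 <= t)%N -> t \in H0 -> forall u : R, 0 <= u <= 1 ->
    forall A : set T, F t A ->
      (P (A `&` [set w | (pv t w <= u)%R]) <= u%:E * P A)%E.

Definition LORD_star (E L : nat -> nat) (alpha : R) (pv alphas : nat -> T -> R)
  : Prop :=
  forall t : nat, (1 <= t)%N ->
    F_measurable (LORD_filt E L pv alphas t) (alphas t) /\
    (forall w, 0 <= alphas t w) /\
    (forall w, \sum_(1 <= j < t.+1) alphas j w <=
       alpha * Num.max (\sum_(1 <= j < t | nonconf E L t j)
                          (rej pv alphas j w)%:R) 1).

Definition SAFFRON_star (E L : nat -> nat) (alpha : R)
  (pv alphas lams : nat -> T -> R) : Prop :=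
  forall t : nat, (1 <= t)%N ->
    F_measurable (SAFFRON_filt E L pv alphas lams t) (alphas t) /\
    F_measurable (SAFFRON_filt E L pv alphas lams t) (lams t) /\
    (forall w, 0 <= alphas t w /\ alphas t w <= lams t w /\ lams t w < 1) /\
    (forall w,
       \sum_(1 <= j < t | nonconf E L t j)
          alphas j w / (1 - lams j w) * ((lams j w < pv j w)%R)%:R
       + \sum_(1 <= j < t.+1 | in_conflict E L t j || (j == t))
          alphas j w / (1 - lams j w)
       <= alpha * Num.max (\sum_(1 <= j < t | nonconf E L t j)
                             (rej pv alphas j w)%:R) 1).

End Defs.

(* Let i be a null test. Its level alpha_i (and candidacy threshold lambda_i) is
   determined by the non-conflicting history at time i and, the lag condition making
   these histories nested, also by the history at its decision time E_i >= i. That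
   history takes finitely many values, and on each of its atoms conditional
   super-uniformity gives P(P_i <= alpha_i) <= E[alpha_i] for LORD*, and
   E[alpha_i] <= E[alpha_i / (1 - lambda_i) 1{P_i > lambda_i}] for SAFFRON*. Summing
   over the nulls decided by time t and applying the procedure's wealth constraint
   pointwise (the non-conflicting rejections it counts are all decided, hence in R(t))
   yields E|V(t)| <= alpha E[|R(t)| v 1]. *)

From HB Require Import structures.
From mathcomp Require Import all_boot all_order all_algebra.
From mathcomp Require Import all_classical all_reals all_analysis.
From mathcomp Require Import measurable_realfun lra zify.
Import Order.TTheory GRing.Theory Num.Theory.
Local Open Scope classical_set_scope.
Local Open Scope ring_scope.

Section ConflictSets.
Context {E L : nat -> nat}.
Hypothesis lag_step : forall t, (L t.+1 <= (L t).+1)%N.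

Lemma sub_lag_nondecreasing {i j} : (i <= j)%N -> (i - L i <= j - L j)%N.
Proof.
elim: j => [|j IHj]; first by rewrite leqn0 => /eqP ->.
rewrite leq_eqVlt => /orP[/eqP -> //|]; rewrite ltnS => /IHj.
by have := lag_step j; lia.
Qed.

Lemma nonconf_le {i j k} : (i <= j)%N -> nonconf E L i k -> nonconf E L j k.
Proof.
move=> le_ij; have := sub_lag_nondecreasing le_ij.
by rewrite /nonconf /in_conflict; lia.
Qed.

End ConflictSets.

Lemma nonconf_decided (E L : nat -> nat) t j : nonconf E L t j -> (E j < t)%N.
Proof. by rewrite /nonconf /in_conflict; lia. Qed.

Lemma nonconf_out (E L : nat -> nat) t k : (t <= k)%N -> nonconf E L t k = false.
Proof. by rewrite /nonconf; lia. Qed.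

Section ConflictSums.
Context {R : realDomainType} (E L : nat -> nat) {t : nat}.

Lemma sum_nonconf_le_decided (r : nat -> R) : (forall i, 0 <= r i) ->
  \sum_(1 <= j < t | nonconf E L t j) r j <= \sum_(1 <= i < t.+1 | (E i <= t)%N) r i.
Proof.
move=> r_ge0; rewrite (big_nat_widen _ _ _ _ _ (leqnSn t)) big_mkcond [leRHS]big_mkcond.
apply: ler_sum_nat => i _; case: ifP => [/andP[/nonconf_decided/ltnW -> _] // | _].
by case: ifP.
Qed.

Lemma sum_le_nonconf_conflict {a c : nat -> R} :
  (forall j, (1 <= j <= t)%N -> 0 <= a j) -> (forall j, c j <= 1) ->
  \sum_(1 <= j < t.+1) a j * c j <=
  \sum_(1 <= j < t | nonconf E L t j) a j * c j +
  \sum_(1 <= j < t.+1 | in_conflict E L t j || (j == t)) a j.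
Proof.
move=> a_ge0 c_le1; rewrite (bigID (nonconf E L t)) /=; apply: lerD.
  rewrite (big_nat_widen _ _ _ _ _ (leqnSn t)) big_mkcond [leRHS]big_mkcond.
  apply: ler_sum_nat => j _; case: ifP => //= nc_j.
  have lt_jt : (j < t)%N by move: nc_j; rewrite /nonconf; lia.
  by rewrite ifT //; apply/andP.
rewrite big_mkcond [leRHS]big_mkcond; apply: ler_sum_nat => j j_range.
have a_j_ge0 : 0 <= a j by apply: a_ge0; move: j_range; lia.
case: ifP => [conf_j|_]; last by case: ifP.
rewrite ifT ?ler_piMr //.
by move: conf_j j_range; rewrite /nonconf /in_conflict; lia.
Qed.

End ConflictSums.

Lemma natr_indic {T : Type} {R : pzRingType} (b : T -> bool) w :
  (b w)%:R = \1_[set w | b w] w :> R.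
Proof. by rewrite indicE; case: (b w) / idP => bw; [rewrite mem_set | rewrite memNset]. Qed.

Lemma measurable_natr_bool {d} {T : measurableType d} {R : realType} (b : T -> bool) :
  measurable_fun setT b -> measurable_fun setT (fun w => (b w)%:R : R).
Proof.
move=> mb; rewrite (_ : (fun w => _) = \1_[set w | b w]).
  by apply/measurable_indic; rewrite -[X in measurable X]setTI; exact: mb.
by apply/funext => w; rewrite natr_indic.
Qed.

Lemma factor_fibers {T : Type} {K : finType} {R : realType} {tau : T -> K} {f : T -> R}
    (Q : R -> Prop) :
  Q 0 -> (forall w, Q (f w)) -> (forall w w', tau w = tau w' -> f w = f w') ->
  exists2 h : K -> R, f = h \o tau & forall b, Q (h b).
Proof.
move=> Q0 Qf f_fib.
have /choice[h hP] : forall b, exists r, Q r /\ forall w, tau w = b -> f w = r.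
  move=> b; have [[w0 <-]|no_w] := pselect (exists w, tau w = b).
    by exists (f w0); split => // w /f_fib.
  by exists 0; split => // w tau_w; case: no_w; exists w.
by exists h => [|b]; [apply/funext => w; exact: (hP _).2 | exact: (hP b).1].
Qed.

Definition superuniform_on {d} {T : measurableType d} {R : realType}
  (P : probability T R) (p : T -> R) (A : set T) : Prop :=
  forall u, 0 <= u <= 1 -> (P (A `&` [set w | (p w <= u)%R]) <= u%:E * P A)%E.

Section SuperUniform.
Context {d : measure_display} {T : measurableType d} {R : realType}.
Variables (P : probability T R) (p : T -> R).
Hypothesis mp : measurable_fun setT p.

Lemma measurable_le_level u : measurable [set w | p w <= u].
Proof. by rewrite -[X in measurable X]setTI; exact: measurable_fun_le. Qed.

Lemma measurable_gt_level u : measurable [set w | u < p w].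
Proof.
rewrite (_ : [set w | u < p w] = ~` [set w | p w <= u]).
  exact/measurableC/measurable_le_level.
by apply/seteqP; split => w /=; rewrite ltNge => /negP.
Qed.

Variable A : set T.
Hypotheses (mA : measurable A) (suA : superuniform_on P p A).

Lemma superuniform_on_ge0 u : 0 <= u ->
  (P (A `&` [set w | (p w <= u)%R]) <= u%:E * P A)%E.
Proof.
move=> u_ge0; have [u_le1|u_gt1] := lerP u 1; first by apply: suA; rewrite u_ge0.
apply: le_trans (measureIl P mA (measurable_le_level u)) _.
by rewrite lee_pemull // lee_fin ltW.
Qed.

Lemma superuniform_on_gt l : 0 <= l < 1 ->
  ((1 - l)%:E * P A <= P (A `&` [set w | (l < p w)%R]))%E.
Proof.
move=> /andP[l_ge0 l_lt1].
have mAle := measurableI _ _ mA (measurable_le_level l).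
have mAgt := measurableI _ _ mA (measurable_gt_level l).
have splitA : (P A = P (A `&` [set w | (p w <= l)%R]) + P (A `&` [set w | (l < p w)%R]))%E.
  rewrite -measureU //; last first.
    by apply/seteqP; split => w // [[_ /= le_pl] [_ /=]]; rewrite ltNge le_pl.
  congr (P _); rewrite -setIUr (_ : _ `|` _ = setT) ?setIT //.
  by apply/seteqP; split => w //= _; case: (lerP (p w) l) => ?; [left|right].
have le_Al : (P (A `&` [set w | (p w <= l)%R]) <= l%:E * P A)%E.
  by apply: suA; rewrite l_ge0 ltW.
move: le_Al splitA.
rewrite -[P A]fineK ?fin_num_measure // -[P (A `&` _)]fineK ?fin_num_measure //.
rewrite -[P (A `&` [set w | (l < p w)%R])]fineK ?fin_num_measure // -EFinD -!EFinM.
by rewrite lee_fin => le_Al [eqA]; rewrite eqA in le_Al *; rewrite lee_fin; lra.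
Qed.

End SuperUniform.

Section FinitePartition.
Context {d : measure_display} {T : measurableType d} {R : realType}.
Variable P : probability T R.
Context {K : finType} {tau : T -> K}.
Hypothesis measurable_atom : forall b, measurable (tau @^-1` [set b]).

Lemma factor_atoms (h : K -> R) (D : K -> set T) w :
  h (tau w) * \1_(D (tau w)) w =
  \sum_(b : K) h b * \1_(tau @^-1` [set b] `&` D b) w.
Proof.
rewrite (bigD1 (tau w)) //= big1 => [|b /eqP b_neq]; last first.
  by rewrite indicE memNset ?mulr0 //= => -[tau_w _]; apply: b_neq.
rewrite addr0 !indicE; case: (w \in D (tau w)) / idP => [/set_mem Dw|Dw].
  by rewrite mem_set.
by rewrite memNset //= => -[_ /mem_set].
Qed.

Lemma measurable_fun_fibers (f : T -> R) :
  (forall w w', tau w = tau w' -> f w = f w') -> measurable_fun setT f.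
Proof.
move=> f_fib; have [h -> _] := factor_fibers (fun _ => True) I (fun _ => I) f_fib.
rewrite (_ : h \o tau = fun w => \sum_(b : K) h b * \1_(tau @^-1` [set b] `&` setT) w).
  apply: measurable_sum => b; apply: measurable_funM; first exact: measurable_cst.
  by apply: measurable_indic; rewrite setIT.
by apply/funext => w; rewrite -factor_atoms indicT mulr1.
Qed.

Lemma integral_factor (h : K -> R) (D : K -> set T) :
  (forall b, 0 <= h b) -> (forall b, measurable (D b)) ->
  (\int[P]_w (h (tau w) * \1_(D (tau w)) w)%:E =
   \sum_(b : K) (h b)%:E * P (tau @^-1` [set b] `&` D b))%E.
Proof.
move=> h_ge0 mD; have mAD b := measurableI _ _ (measurable_atom b) (mD b).
under eq_integral do rewrite factor_atoms -sumEFin.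
rewrite ge0_integral_sum //; last first.
- by move=> b w _; rewrite lee_fin mulr_ge0.
- by move=> b; apply/measurable_EFinP/measurable_funM;
    [exact: measurable_cst | exact: measurable_indic].
apply: eq_bigr => b _; under eq_integral do rewrite EFinM.
by rewrite ge0_integralZl_EFin ?integral_indic ?setIT //;
  exact/measurable_EFinP/measurable_indic.
Qed.

Lemma integral_factor_setT (h : K -> R) : (forall b, 0 <= h b) ->
  (\int[P]_w (h (tau w))%:E = \sum_(b : K) (h b)%:E * P (tau @^-1` [set b]))%E.
Proof.
move=> h_ge0; under eq_bigr do rewrite -[tau @^-1` _]setIT.
rewrite -(integral_factor h (fun _ => setT)) //.
by under [RHS]eq_integral do rewrite indicT mulr1.
Qed.

Context {p : T -> R}.
Hypothesis mp : measurable_fun setT p.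
Hypothesis superuniform_atom : forall b, superuniform_on P p (tau @^-1` [set b]).

Lemma integral_rejection_le (a : T -> R) :
  (forall w w', tau w = tau w' -> a w = a w') -> (forall w, 0 <= a w) ->
  (\int[P]_w ((p w <= a w)%R%:R)%:E <= \int[P]_w (a w)%:E)%E.
Proof.
move=> a_fib a_ge0; have [h -> h_ge0] := factor_fibers (fun x => 0 <= x) (lexx 0) a_ge0 a_fib.
rewrite integral_factor_setT //.
under eq_integral do rewrite (natr_indic (fun w => p w <= h (tau w))) -[X in X%:E]mul1r.
rewrite (integral_factor (fun _ => 1) (fun b => [set w | p w <= h b])) //; last first.
  by move=> b; exact: measurable_le_level.
apply: lee_sum => b _; rewrite mul1e.
exact: superuniform_on_ge0.
Qed.

Lemma integral_le_noncandidate_charge (a l : T -> R) :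
  (forall w w', tau w = tau w' -> a w = a w') ->
  (forall w w', tau w = tau w' -> l w = l w') ->
  (forall w, 0 <= a w) -> (forall w, 0 <= l w < 1) ->
  (\int[P]_w (a w)%:E <= \int[P]_w (a w / (1 - l w) * (l w < p w)%R%:R)%:E)%E.
Proof.
move=> a_fib l_fib a_ge0 l01.
have [ha -> ha_ge0] := factor_fibers (fun x => 0 <= x) (lexx 0) a_ge0 a_fib.
have zero01 : 0 <= (0 : R) < 1 by rewrite lexx ltr01.
have [hl -> hl01] := factor_fibers (fun x => 0 <= x < 1) zero01 l01 l_fib.
have scaled_ge0 b : 0 <= ha b / (1 - hl b).
  by have /andP[_ lt1] := hl01 b; rewrite divr_ge0 // subr_ge0 ltW.
rewrite integral_factor_setT //.
under eq_integral do rewrite (natr_indic (fun w => hl (tau w) < p w)).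
rewrite (integral_factor (fun b => ha b / (1 - hl b)) (fun b => [set w | hl b < p w])) //;
  last by move=> b; exact: measurable_gt_level.
apply: lee_sum => b _; have /andP[_ lt1] := hl01 b.
rewrite -[X in (X%:E * _ <= _)%E](@divfK _ (1 - hl b)) ?subr_eq0 ?gt_eqF //.
rewrite EFinM -muleA; apply: lee_wpmul2l; first by rewrite lee_fin.
exact: superuniform_on_gt.
Qed.

End FinitePartition.

Lemma sigma_of_fibers {T V : Type} {R : realType} (Y : T -> V) (f : T -> R) :
  F_measurable (sigma_of Y) f -> forall w w', Y w = Y w' -> f w = f w'.
Proof.
move=> mf w w' Y_ww'; have [B preB] := mf [set f w] (measurable_set1 (f w)).
have fw : (f @^-1` [set f w]) w by [].
rewrite preB /preimage /= Y_ww' in fw.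
have : (Y @^-1` B) w' by [].
by rewrite -preB.
Qed.

Section History.
Context {d : measure_display} {T : measurableType d}.
Context (E L : nat -> nat) {V : finType} (Z : nat -> T -> V) (v0 : V).

(* With [Z := rej pv alphas] and [v0 := false] (resp. [Z k w := (rej pv alphas k w,
   cand pv lams k w)] and [v0 := (false, false)]), [sigma_of (history n)] is by
   definition [LORD_filt] (resp. [SAFFRON_filt]) at time [n]. *)
Definition history n w k := if nonconf E L n k then Z k w else v0.

(* [history n w k = v0] for [k >= n], so [history n w] is determined by this code. *)
Definition history_code n w : {ffun 'I_n -> V} := [ffun k : 'I_n => history n w k].

Lemma history_code_inj n w w' :
  history_code n w = history_code n w' -> history n w = history n w'.
Proof.
move=> code_eq; apply/funext => k; have [lt_kn|le_nk] := ltnP k n.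
  by have := congr1 (fun c : {ffun 'I_n -> V} => c (Ordinal lt_kn)) code_eq; rewrite !ffunE.
by rewrite /history nonconf_out.
Qed.

Lemma history_le {i j w w'} : (forall t, (L t.+1 <= (L t).+1)%N) -> (i <= j)%N ->
  history j w = history j w' -> history i w = history i w'.
Proof.
move=> lag_step le_ij hist_eq; apply/funext => k; rewrite /history.
case nc_ik: (nonconf E L i k) => //.
by have := congr1 (fun h => h k) hist_eq; rewrite /history (nonconf_le lag_step le_ij nc_ik).
Qed.

Lemma sigma_of_history_atom n b : sigma_of (history n) (history_code n @^-1` [set b]).
Proof.
exists [set y | forall k : 'I_n, y k = b k].
apply/seteqP; split => w /=; first by move=> <- k; rewrite ffunE.
by move=> hw; apply/ffunP => k; rewrite ffunE hw.
Qed.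

Lemma measurable_history_atom n :
  (forall k, (1 <= k < n)%N -> forall v, measurable (Z k @^-1` [set v])) ->
  forall b, measurable (history_code n @^-1` [set b]).
Proof.
move=> mZ b.
rewrite (_ : _ @^-1` _ = \bigcap_(k in [set: 'I_n]) [set w | history n w k = b k]).
  apply: fin_bigcap_measurable => [|k _]; first exact: finite_finset.
  rewrite /history; case nc_k: (nonconf E L n k); first by apply: mZ; case/andP: nc_k.
  have [v0_eq|v0_neq] := pselect (v0 = b k).
    by rewrite (_ : [set _ | _] = setT) //; apply/seteqP; split.
  by rewrite (_ : [set _ | _] = set0) //; apply/seteqP; split.
apply/seteqP; split => w /=; first by move=> <- k _; rewrite ffunE.
by move=> hw; apply/ffunP => k; rewrite ffunE; exact: hw.
Qed.

End History.

Arguments history_le {d T E L V Z v0 i j w w'}.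

Section ExpectedDiscoveries.
Context {d : measure_display} {T : measurableType d} {R : realType}.
Variable P : probability T R.

Lemma measurable_sum_seq (I : eqType) (s : seq I) (f : I -> T -> R) :
  (forall i, i \in s -> measurable_fun setT (f i)) ->
  measurable_fun setT (fun w => \sum_(i <- s) f i w).
Proof.
move=> mf; under eq_fun => w do rewrite big_seq big_mkcond.
apply: measurable_sum => i; case: (boolP (i \in s)) => [/mf //|_].
exact: measurable_cst.
Qed.

Lemma ge0_integral_sum_seq (I : eqType) (s : seq I) (f : I -> T -> R) :
  (forall i, i \in s -> measurable_fun setT (f i)) ->
  (forall i w, i \in s -> 0 <= f i w) ->
  (\int[P]_w (\sum_(i <- s) f i w)%:E = \sum_(i <- s) \int[P]_w (f i w)%:E)%E.
Proof.
move=> mf f_ge0; pose g i := if i \in s then f i else cst 0.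
transitivity (\int[P]_w (\sum_(i <- s) (g i w)%:E))%E.
  apply: eq_integral => w _; rewrite sumEFin; congr (_%:E).
  by rewrite big_seq_cond [RHS]big_seq_cond; apply: eq_bigr => i /andP[s_i _]; rewrite /g s_i.
rewrite ge0_integral_sum //; last 2 first.
- move=> i; apply/measurable_EFinP; rewrite /g.
  by case: ifP => s_i; [exact: mf | exact: measurable_cst].
- by move=> i w _; rewrite /g; case: ifP => s_i; rewrite lee_fin ?f_ge0.
rewrite big_seq_cond [RHS]big_seq_cond; apply: eq_bigr => i /andP[s_i _].
by under eq_integral do rewrite /g s_i.
Qed.

Lemma fine_div_le (X Y : \bar R) (a : R) :
  (0 <= X)%E -> (1 <= Y)%E -> Y \is a fin_num -> (X <= a%:E * Y)%E -> fine X / fine Y <= a.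
Proof.
case: Y => [y| |] // X_ge0; rewrite lee_fin => y_ge1 _.
case: X X_ge0 => [x| |] //= x_ge0; rewrite -EFinM lee_fin => le_xay.
by rewrite ler_pdivrMr // (lt_le_trans ltr01).
Qed.

Context (H0 : set nat) (E : nat -> nat) {pv alphas : nat -> T -> R}.
Hypothesis mpv : forall t, measurable_fun setT (pv t).
Hypothesis malphas : forall i, (1 <= i)%N -> measurable_fun setT (alphas i).

Lemma measurable_rej i : (1 <= i)%N ->
  measurable_fun setT (fun w => (rej pv alphas i w)%:R : R).
Proof.
by move=> i_ge1; apply/measurable_natr_bool/measurable_fun_ler; [exact: mpv | exact: malphas].
Qed.

Lemma nrej_le t w : nrej E pv alphas t w <= t%:R.
Proof.
rewrite /nrej big_mkcond -[t in t%:R](subn1 t.+1) -sumr_const_nat.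
by apply: ler_sum => i _; case: ifP; rewrite ?lern1 ?leq_b1.
Qed.

Lemma measurable_nrej_max1 t : measurable_fun setT (fun w => Num.max (nrej E pv alphas t w) 1).
Proof.
apply: measurable_maxr (measurable_cst _); rewrite /nrej.
under eq_fun => w do rewrite big_mkcond.
apply: measurable_sum_seq => i; rewrite mem_index_iota => /andP[/measurable_rej m_rej _].
by case: (E i <= t)%N; [exact: m_rej | exact: measurable_cst].
Qed.

Lemma mFDR_le_of_integral_le (alpha : R) t :
  (\int[P]_w (nfalse H0 E pv alphas t w)%:E <=
   alpha%:E * \int[P]_w (Num.max (nrej E pv alphas t w) 1)%:E)%E ->
  mFDR P H0 E pv alphas t <= alpha.
Proof.
have max_ge1 w : 1 <= Num.max (nrej E pv alphas t w) 1 by rewrite le_max lexx orbT.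
have mmax := measurable_nrej_max1 t.
rewrite /mFDR unlock; apply: fine_div_le.
- by apply: integral_ge0 => w _; rewrite lee_fin sumr_ge0.
- have <- : (\int[P]_w (1 : R)%:E = 1)%E.
    by rewrite integral_cst // mul1e; exact: probability_setT.
  apply: ge0_le_integral => //; first exact/measurable_EFinP.
  by move=> w _; rewrite lee_fin.
- rewrite ge0_fin_numE; last by apply: integral_ge0 => w _; rewrite lee_fin (le_trans ler01).
  apply: le_lt_trans (_ : _ <= \int[P]_w (t.+1%:R : R)%:E)%E _; last first.
    by rewrite integral_cst // ltey_eq fin_numM // fin_num_measure.
  apply: ge0_le_integral => //; first by move=> w _; rewrite lee_fin (le_trans ler01).
  - exact/measurable_EFinP.
  - move=> w _; rewrite lee_fin ge_max ler1n andbT.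
    by apply: le_trans (nrej_le t w) _; rewrite ler_nat.
Qed.

Lemma mFDR_le_of_budget {alpha : R} {g : nat -> T -> R} {t} :
  0 <= alpha ->
  (forall i, (1 <= i)%N -> measurable_fun setT (g i)) ->
  (forall i w, (1 <= i)%N -> 0 <= g i w) ->
  (forall i, (1 <= i)%N -> i \in H0 ->
     (\int[P]_w ((rej pv alphas i w)%:R)%:E <= \int[P]_w (g i w)%:E)%E) ->
  (forall w, \sum_(1 <= i < t.+1) g i w <= alpha * Num.max (nrej E pv alphas t w) 1) ->
  mFDR P H0 E pv alphas t <= alpha.
Proof.
move=> alpha_ge0 mg g_ge0 rej_le_g budget; apply: mFDR_le_of_integral_le.
have iota_ge1 i : i \in index_iota 1 t.+1 -> (1 <= i)%N by rewrite mem_index_iota => /andP[].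
rewrite /nfalse; under eq_integral do rewrite -big_filter.
rewrite ge0_integral_sum_seq; first last.
- by move=> i w _; rewrite ler0n.
- by move=> i; rewrite mem_filter => /andP[_ /iota_ge1/measurable_rej].
rewrite big_filter; apply: le_trans (_ : _ <= \sum_(1 <= i < t.+1) \int[P]_w (g i w)%:E)%E _.
  rewrite big_mkcond [leRHS]big_seq big_seq; apply: lee_sum => i /iota_ge1 i_ge1.
  case: ifP => [/andP[_ /rej_le_g] -> // | _].
  by apply: integral_ge0 => w _; rewrite lee_fin g_ge0.
rewrite -ge0_integral_sum_seq; last 2 first.
- by move=> i /iota_ge1; exact: mg.
- by move=> i w /iota_ge1; exact: g_ge0.
rewrite -ge0_integralZl_EFin //; last 2 first.
- by move=> w _; rewrite lee_fin (le_trans ler01) // le_max lexx orbT.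
- exact/measurable_EFinP/measurable_nrej_max1.
apply: ge0_le_integral => //.
- by move=> w _; rewrite lee_fin big_seq sumr_ge0 // => i /iota_ge1; exact: g_ge0.
- by apply/measurable_EFinP/measurable_sum_seq => i /iota_ge1; exact: mg.
- apply/measurable_EFinP/measurable_funM; first exact: measurable_cst.
  exact: measurable_nrej_max1.
- by move=> w _; rewrite -EFinM lee_fin.
Qed.

End ExpectedDiscoveries.

Lemma probability_inhabited {d} {T : measurableType d} {R : realType} (P : probability T R) :
  inhabited T.
Proof.
apply: contrapT => noT; have : P [set: T] = 0%E.
  by rewrite (_ : [set: T] = set0) ?measure0 //; apply/seteqP; split => // w; case: noT.
by rewrite probability_setT => /eqP; rewrite onee_eq0.
Qed.

Lemma ge0_of_le_mul_max1 {R : realDomainType} (x y a : R) :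
  0 <= x -> x <= a * Num.max y 1 -> 0 <= a.
Proof.
move=> x_ge0 le_x; have max_gt0 : 0 < Num.max y 1 by rewrite lt_max ltr01 orbT.
by rewrite -(pmulr_lge0 _ max_gt0) (le_trans x_ge0).
Qed.

Lemma measurable_bool_level {d} {T : measurableType d} (b : T -> bool) v :
  measurable_fun setT b -> measurable (b @^-1` [set v]).
Proof. by move=> mb; rewrite -[X in measurable X]setTI; exact: mb. Qed.

Section LORD.
Context {d : measure_display} {T : measurableType d} {R : realType}.
Context {P : probability T R} {H0 : set nat} {E L : nat -> nat} {alpha : R}.
Context {pv alphas : nat -> T -> R}.
Hypothesis mpv : forall t, measurable_fun setT (pv t).
Hypothesis decision_late : forall t, (t <= E t)%N.
Hypothesis lag_step : forall t, (L t.+1 <= (L t).+1)%N.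
Hypothesis lord : LORD_star E L alpha pv alphas.
Hypothesis superuniform : cond_superuniform P H0 pv (fun t => LORD_filt E L pv alphas (E t)).

Local Notation code := (history_code E L (rej pv alphas) false).

Lemma LORD_alphas_fibers i n w w' : (1 <= i)%N -> (i <= n)%N ->
  code n w = code n w' -> alphas i w = alphas i w'.
Proof.
move=> i_ge1 le_in /history_code_inj /(history_le lag_step le_in).
by apply: sigma_of_fibers; case: (lord i i_ge1).
Qed.

Lemma LORD_measurable_atom n :
  (forall k, (1 <= k < n)%N -> measurable_fun setT (alphas k)) ->
  forall b, measurable (code n @^-1` [set b]).
Proof.
move=> m_before; apply: measurable_history_atom => k /m_before malpha v.
exact/measurable_bool_level/measurable_fun_ler.
Qed.

Lemma LORD_measurable_alphas i : (1 <= i)%N -> measurable_fun setT (alphas i).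
Proof.
elim/ltn_ind: i => i IHi i_ge1.
have matom : forall b, measurable (code i @^-1` [set b]).
  by apply: LORD_measurable_atom => k /andP[k_ge1 lt_ki]; exact: IHi.
by apply: (measurable_fun_fibers matom) => w w'; exact: LORD_alphas_fibers.
Qed.

Lemma LORD_rej_le i : (1 <= i)%N -> i \in H0 ->
  (\int[P]_w ((rej pv alphas i w)%:R)%:E <= \int[P]_w (alphas i w)%:E)%E.
Proof.
move=> i_ge1 null_i.
have matom : forall b, measurable (code (E i) @^-1` [set b]).
  by apply: LORD_measurable_atom => k /andP[k_ge1 _]; exact: LORD_measurable_alphas.
apply: (integral_rejection_le P matom (mpv i)) => [b u u01|w w'|w].
- by apply: superuniform => //; exact: sigma_of_history_atom.
- exact: LORD_alphas_fibers.
- by case: (lord i i_ge1) => _ [].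
Qed.

Lemma LORD_alpha_ge0 : 0 <= alpha.
Proof.
have [w] := probability_inhabited P; have [_ [alpha1_ge0 budget1]] := lord 1 (leqnn 1).
by apply: ge0_of_le_mul_max1 (budget1 w); rewrite big_nat1.
Qed.

Lemma LORD_budget t w :
  \sum_(1 <= i < t.+1) alphas i w <= alpha * Num.max (nrej E pv alphas t w) 1.
Proof.
case: t => [|t]; first by rewrite big_geq // mulr_ge0 ?LORD_alpha_ge0 // le_max ler01 orbT.
have [_ [_ budget]] := lord t.+1 (ltn0Sn t).
apply: le_trans (budget w) _; rewrite ler_wpM2l ?LORD_alpha_ge0 // le_max2 //.
by apply: sum_nonconf_le_decided => i; exact: ler0n.
Qed.

Lemma LORD_mFDR_le t : mFDR P H0 E pv alphas t <= alpha.
Proof.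
apply: (mFDR_le_of_budget P H0 E mpv LORD_measurable_alphas LORD_alpha_ge0
  LORD_measurable_alphas _ LORD_rej_le (LORD_budget t)).
by move=> i w i_ge1; case: (lord i i_ge1) => _ [].
Qed.

End LORD.

Definition noncandidate_charge {d} {T : measurableType d} {R : realType}
  (pv alphas lams : nat -> T -> R) i w :=
  alphas i w / (1 - lams i w) * (lams i w < pv i w)%R%:R.

Section SAFFRON.
Context {d : measure_display} {T : measurableType d} {R : realType}.
Context {P : probability T R} {H0 : set nat} {E L : nat -> nat} {alpha : R}.
Context {pv alphas lams : nat -> T -> R}.
Hypothesis mpv : forall t, measurable_fun setT (pv t).
Hypothesis decision_late : forall t, (t <= E t)%N.
Hypothesis lag_step : forall t, (L t.+1 <= (L t).+1)%N.
Hypothesis saffron : SAFFRON_star E L alpha pv alphas lams.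
Hypothesis superuniform :
  cond_superuniform P H0 pv (fun t => SAFFRON_filt E L pv alphas lams (E t)).

Local Notation charge := (noncandidate_charge pv alphas lams).

Local Notation code :=
  (history_code E L (fun k w => (rej pv alphas k w, cand pv lams k w)) (false, false)).

Lemma SAFFRON_fibers {i n} {f : T -> R} {w w'} : (1 <= i)%N -> (i <= n)%N ->
  F_measurable (SAFFRON_filt E L pv alphas lams i) f -> code n w = code n w' -> f w = f w'.
Proof.
move=> i_ge1 le_in mf /history_code_inj /(history_le lag_step le_in).
exact: sigma_of_fibers.
Qed.

Lemma SAFFRON_alphas_lams_fibers {i n w w'} : (1 <= i)%N -> (i <= n)%N ->
  code n w = code n w' -> alphas i w = alphas i w' /\ lams i w = lams i w'.
Proof.
move=> i_ge1 le_in code_eq; have [malpha [mlam _]] := saffron i i_ge1.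
by split; apply: (SAFFRON_fibers i_ge1 le_in _ code_eq).
Qed.

Lemma SAFFRON_measurable_atom n :
  (forall k, (1 <= k < n)%N ->
     measurable_fun setT (alphas k) /\ measurable_fun setT (lams k)) ->
  forall b, measurable (code n @^-1` [set b]).
Proof.
move=> m_before; apply: measurable_history_atom => k /m_before[malpha mlam] v.
rewrite (_ : _ @^-1` _ =
    rej pv alphas k @^-1` [set v.1] `&` cand pv lams k @^-1` [set v.2]).
  by apply: measurableI; apply/measurable_bool_level/measurable_fun_ler.
by case: v => v1 v2; apply/seteqP; split => w /=; [case=> -> -> | case=> -> ->].
Qed.

Lemma SAFFRON_measurable {i} : (1 <= i)%N ->
  measurable_fun setT (alphas i) /\ measurable_fun setT (lams i).
Proof.
elim/ltn_ind: i => i IHi i_ge1.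
have matom : forall b, measurable (code i @^-1` [set b]).
  by apply: SAFFRON_measurable_atom => k /andP[k_ge1 lt_ki]; exact: IHi.
by split; apply: (measurable_fun_fibers matom) => w w';
  case/(SAFFRON_alphas_lams_fibers i_ge1 (leqnn i)).
Qed.

Lemma SAFFRON_measurable_code_atom n b : measurable (code n @^-1` [set b]).
Proof. by apply: SAFFRON_measurable_atom => k /andP[k_ge1 _]; exact: SAFFRON_measurable. Qed.

Lemma measurable_noncandidate_charge i : (1 <= i)%N -> measurable_fun setT (charge i).
Proof.
move=> i_ge1; have [malpha mlam] := SAFFRON_measurable i_ge1.
apply: measurable_funM; last exact/measurable_natr_bool/measurable_fun_ltr.
apply: (measurable_fun_fibers (SAFFRON_measurable_code_atom i)) => w w'.
by case/(SAFFRON_alphas_lams_fibers i_ge1 (leqnn i)) => -> ->.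
Qed.

Lemma SAFFRON_scaled_alpha_ge0 i w : (1 <= i)%N -> 0 <= alphas i w / (1 - lams i w).
Proof.
move=> i_ge1; have [_ [_ [range _]]] := saffron i i_ge1; have [a_ge0 [_ l_lt1]] := range w.
by rewrite divr_ge0 // subr_ge0 ltW.
Qed.

Lemma SAFFRON_rej_le i : (1 <= i)%N -> i \in H0 ->
  (\int[P]_w ((rej pv alphas i w)%:R)%:E <= \int[P]_w (charge i w)%:E)%E.
Proof.
move=> i_ge1 null_i; have [_ [_ [range _]]] := saffron i i_ge1.
have matom := SAFFRON_measurable_code_atom (E i).
have su_atom b : superuniform_on P (pv i) (code (E i) @^-1` [set b]).
  by move=> u u01; apply: superuniform => //; exact: sigma_of_history_atom.
have fibers w w' := SAFFRON_alphas_lams_fibers (w := w) (w' := w') i_ge1 (decision_late i).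
apply: le_trans (integral_rejection_le P matom (mpv i) su_atom _ _ _) _.
- by move=> w w' /fibers[].
- by move=> w; have [] := range w.
rewrite /noncandidate_charge; apply: (integral_le_noncandidate_charge P matom (mpv i) su_atom).
- by move=> w w' /fibers[].
- by move=> w w' /fibers[].
- by move=> w; have [] := range w.
- move=> w; have [a_ge0 [a_le_l l_lt1]] := range w.
  by rewrite l_lt1 andbT (le_trans a_ge0).
Qed.

Lemma SAFFRON_alpha_ge0 : 0 <= alpha.
Proof.
have [w] := probability_inhabited P; have [_ [_ [_ budget1]]] := saffron 1 (leqnn 1).
apply: ge0_of_le_mul_max1 (budget1 w); apply: addr_ge0; rewrite big_nat_cond sumr_ge0 //.
  by move=> j /andP[/andP[j_ge1 _] _]; rewrite mulr_ge0 ?SAFFRON_scaled_alpha_ge0.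
by move=> j /andP[/andP[j_ge1 _] _]; rewrite SAFFRON_scaled_alpha_ge0.
Qed.

Lemma SAFFRON_budget t w :
  \sum_(1 <= i < t.+1) charge i w <= alpha * Num.max (nrej E pv alphas t w) 1.
Proof.
have alpha_ge0 := SAFFRON_alpha_ge0.
case: t => [|t]; first by rewrite big_geq // mulr_ge0 // le_max ler01 orbT.
have [_ [_ [_ budget]]] := saffron t.+1 (ltn0Sn t).
have scaled_alpha_ge0 j : (1 <= j <= t.+1)%N -> 0 <= alphas j w / (1 - lams j w).
  by case/andP => /SAFFRON_scaled_alpha_ge0.
have indicator_le1 j : ((lams j w < pv j w)%R%:R : R) <= 1 by rewrite lern1 leq_b1.
apply: le_trans (sum_le_nonconf_conflict E L scaled_alpha_ge0 indicator_le1) _.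
apply: le_trans (budget w) _; rewrite ler_wpM2l // le_max2 //.
by apply: sum_nonconf_le_decided => i; exact: ler0n.
Qed.

Lemma SAFFRON_mFDR_le t : mFDR P H0 E pv alphas t <= alpha.
Proof.
have malphas i (i_ge1 : (1 <= i)%N) := (SAFFRON_measurable i_ge1).1.
apply: (mFDR_le_of_budget P H0 E mpv malphas SAFFRON_alpha_ge0
  measurable_noncandidate_charge _ SAFFRON_rej_le (SAFFRON_budget t)).
by move=> i w i_ge1; rewrite mulr_ge0 ?SAFFRON_scaled_alpha_ge0.
Qed.

End SAFFRON.

Theorem theorem1 (d : measure_display) (T : measurableType d) (R : realType)
  (P : probability T R) (H0 : set nat) (E L : nat -> nat) (alpha : R)
  (pv : nat -> T -> R) :
  (forall t : nat, measurable_fun setT (pv t)) ->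
  (forall t : nat, (t <= E t)%N) ->
  (forall t : nat, (L t.+1 <= (L t).+1)%N) ->
  (forall alphas : nat -> T -> R,
     LORD_star E L alpha pv alphas ->
     cond_superuniform P H0 pv
       (fun t => LORD_filt E L pv alphas (E t)) ->
     forall t : nat, mFDR P H0 E pv alphas t <= alpha)
  /\
  (forall alphas lams : nat -> T -> R,
     SAFFRON_star E L alpha pv alphas lams ->
     cond_superuniform P H0 pv
       (fun t => SAFFRON_filt E L pv alphas lams (E t)) ->
     forall t : nat, mFDR P H0 E pv alphas t <= alpha).
Proof.
move=> mpv decision_late lag_step; split.
  move=> alphas lord superuniform t.
  exact: LORD_mFDR_le mpv decision_late lag_step lord superuniform t.
move=> alphas lams saffron superuniform t.
exact: SAFFRON_mFDR_le mpv decision_late lag_step saffron superuniform t.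
Qed.
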